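(* For any suitable parameters $(m,q,d,\tau)$, the shifted projection protocol $\Pi$ is perfectly safe: for every run $\rho$ of $\Pi$, every card $c\in\Omega$ and every agent $P$, $\Pr(c\in H_P\mid\rho)=\tau_P/|\tau|$.
   Context: Agents $\mathcal A=\{A,B_1,\dots,B_m\}$ speak in order $A,B_1,\dots,B_m$. A distribution type is a vector $\tau=(\tau_P)_{P\in\mathcal A}$ of positive integers, $|\tau|=\sum_P\tau_P$; the deck $\Omega$ has $|\tau|$ cards; a deal of type $\tau$ is a partition $H=(H_P)_P$ of $\Omega$ with $|H_P|=\tau_P$. Suitable parameters: $m>1$, $q>m$ a prime power, $d>0$, $|\tau|=q^{d+1}$, $\tau_A=q^{d+1}-q^d$, $\tau_{B_k}>q^{d-1}$ for each $k\in[1,m]$. A transversal hyperplane $V\subseteq\mathbb F_q^{d+1}$ is $\{x: x_{d+1}=a_1x_1+\dots+a_dx_d+b\}$; $\sigma(V)=(a_1,\dots,a_d)$; $\pi$ projects $\mathbb F_q^{d+1}$ onto the first $d$ coordinates; $\pi^V_\downarrow(w)=\pi(w)+\sigma(V)$ for $w\in V$. Shifted projection protocol (tokens: maps $\Omega\to\mathbb F_q^{d+1}$ and subsets of $\mathbb F_q^d$; runs are finite token sequences, $\rho*a$ appends $a$): maximal executions for deal $H$ are $(H,f,X_1,\dots,X_m)$ with $f:\Omega\to\mathbb F_q^{d+1}$ a bijection such that $V=\mathbb F_q^{d+1}\setminus f[H_A]$ is a transversal hyperplane and $X_k=\pi^V_\downarrow[f[H_{B_k}]]$; $\Pi(H,\rho)$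 is the set of tokens $a$ with $(H,\rho*a)$ an initial segment of a maximal execution; an execution is $(H,a_0,\dots,a_n)$ with $a_k\in\Pi(H,a_0,\dots,a_{k-1})$ for all $k$; $\rho$ is a run of $\Pi$ if some $(H,\rho)$ is an execution. Probability model: a deal $H$ is drawn uniformly at random among deals of type $\tau$; then, starting from the empty run, while $\Pi(H,\rho)\neq\emptyset$ for the current run $\rho$, a token is drawn uniformly at random from $\Pi(H,\rho)$ and appended. The event ''$\rho$'' means the first $|\rho|$ tokens produced are exactly $\rho$. *)

From HB Require Import structures.
From mathcomp Require Import all_boot all_order all_algebra.
Set Implicit Arguments. Unset Strict Implicit. Unset Printing Implicit Defensive.
Import Order.TTheory GRing.Theory Num.Theory.
Local Open Scope ring_scope.

(* Agents: 'I_m.+1, with ord0 = A and lift ord0 k = B_(k+1) for k : 'I_m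
   (so the speaking order A, B_1, ..., B_m is the order of 'I_m.+1).
   F_q is an arbitrary finite field F, q = #|F|; F_q^n is 'rV[F]_n.
   Coordinate x_(d+1) of x : 'rV_(d.+1) is x ord0 ord_max. *)

Section Protocol.
Variables (F : finFieldType) (m d : nat) (Omega : finType).

Definition agent := 'I_m.+1.
Definition agentA : agent := ord0.
Definition agentB (k : 'I_m) : agent := lift ord0 k.

(* A deal H = (H_P)_P, a partition of Omega indexed by agents, is represented
   by the map sending each card to the agent holding it. *)
Definition deal := {ffun Omega -> agent}.
Definition hand (H : deal) (P : agent) : {set Omega} := [set c | H c == P].
Definition is_deal_of_type (tau : agent -> nat) (H : deal) : bool :=
  [forall P, #|hand H P| == tau P].

Definition token := ({ffun Omega -> 'rV[F]_(d.+1)} + {set 'rV[F]_d})%type.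
Definition run := seq token.

Definition proj (x : 'rV[F]_(d.+1)) : 'rV[F]_d :=
  \row_(i < d) x ord0 (widen_ord (leqnSn d) i).

Definition transversal_hyperplane (a : 'rV[F]_d) (b : F) : {set 'rV[F]_(d.+1)} :=
  [set x : 'rV[F]_(d.+1) | x ord0 ord_max == \sum_(i < d) a 0 i * proj x ord0 i + b].

Definition shifted_proj_image (a : 'rV[F]_d) (f : {ffun Omega -> 'rV[F]_(d.+1)})
  (S : {set Omega}) : {set 'rV[F]_d} :=
  [set proj (f c) + a | c in S].

(* (f, a, b) yields a maximal execution for H : f is a bijection and
   F_q^(d+1) \ f[H_A] is the transversal hyperplane with parameters (a, b) *)
Definition valid_choice (H : deal)
  (p : {ffun Omega -> 'rV[F]_(d.+1)} * 'rV[F]_d * F) : bool :=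
  let: (f, a, b) := p in
  [&& injectiveb f, [forall y, exists c, f c == y] &
      ~: (f @: hand H agentA) == transversal_hyperplane a b].

Definition exec_of (H : deal) (f : {ffun Omega -> 'rV[F]_(d.+1)}) (a : 'rV[F]_d) : run :=
  inl f :: [seq inr (shifted_proj_image a f (hand H (agentB k))) | k <- enum 'I_m].

Definition max_execs (H : deal) : seq run :=
  [seq exec_of H p.1.1 p.1.2 | p <- enum {: {ffun Omega -> 'rV[F]_(d.+1)} * 'rV[F]_d * F}
     & valid_choice H p].

Definition Pi (H : deal) (rho : run) : {set token} :=
  [set t | has (prefix (rcons rho t)) (max_execs H)].

Definition tok0 : token := inr set0.

Definition is_execution (tau : agent -> nat) (H : deal) (rho : run) : bool :=
  is_deal_of_type tau H &&
  [forall k : 'I_(size rho), nth tok0 rho k \in Pi H (take k rho)].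

Definition is_run (tau : agent -> nat) (rho : run) : Prop :=
  exists H, is_execution tau H rho.

(* Probability that, given the deal H, the first |rho| tokens produced by the
   uniform sequential sampling are exactly rho. *)
Definition run_weight (H : deal) (rho : run) : rat :=
  \prod_(k < size rho)
     (if nth tok0 rho k \in Pi H (take k rho)
      then (#|Pi H (take k rho)|%:R)^-1 else 0).

Definition prob_and (tau : agent -> nat) (E : pred deal) (rho : run) : rat :=
  (\sum_(H : deal | is_deal_of_type tau H && E H) run_weight H rho)
  / (#|[set H : deal | is_deal_of_type tau H]|%:R).

Definition cond_prob (tau : agent -> nat) (E : pred deal) (rho : run) : rat :=
  prob_and tau E rho / prob_and tau predT rho.

End Protocol.

(* If the first announced map f conjugates a relabelling s of the cards to an
   affine shear x |-> (pi x + u, x_(d+1) - u.pi x + e) of F_q^(d+1), then the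
   deals H and H o s have the same maximal executions starting with f, up to
   reparametrising the hyperplane: the shear maps the transversal hyperplane
   of slope a onto the one of slope a - u, which exactly compensates the shift
   +u of every projection, so all announcements X_k are unchanged.  Shears act transitively
   on points, so for any two cards c1, c2 such a relabelling sends c2 to c1 and
   preserves the probability of every run (for the empty run any permutation
   does).  Hence Pr(H c = P and rho) does not depend on c, and summing over c
   gives |Omega| Pr(H c = P and rho) = tau_P Pr(rho). *)

From mathcomp Require Import all_boot all_order all_algebra.
From mathcomp Require Import ring perm.
Set Implicit Arguments. Unset Strict Implicit. Unset Printing Implicit Defensive.
Import Order.TTheory GRing.Theory Num.Theory.
Local Open Scope ring_scope.

Section Shear.
Variables (F : finFieldType) (d : nat).
Implicit Types (x y : 'rV[F]_d.+1) (a p u : 'rV[F]_d) (b e t : F).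

Definition lastc x : F := x ord0 ord_max.

Definition dot a p : F := \sum_(i < d) a 0 i * p 0 i.

Definition mkpoint p t : 'rV[F]_d.+1 :=
  \row_j if unlift ord_max j is Some i then p 0 i else t.

Lemma widen_ord_lift (i : 'I_d) : widen_ord (leqnSn d) i = lift ord_max i.
Proof. by apply: val_inj; rewrite /= /bump leqNgt ltn_ord. Qed.

Lemma proj_mkpoint p t : proj (mkpoint p t) = p.
Proof. by apply/rowP => i; rewrite !mxE widen_ord_lift liftK. Qed.

Lemma lastc_mkpoint p t : lastc (mkpoint p t) = t.
Proof. by rewrite /lastc mxE unlift_none. Qed.

Lemma mkpoint_eta x : mkpoint (proj x) (lastc x) = x.
Proof.
by apply/rowP => j; rewrite mxE; case: unliftP => [i ->|->]; rewrite ?mxE ?widen_ord_lift.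
Qed.

Lemma dotDl a a' p : dot (a + a') p = dot a p + dot a' p.
Proof. by rewrite /dot -big_split; apply: eq_bigr => i _; rewrite !mxE mulrDl. Qed.

Lemma dotDr a p p' : dot a (p + p') = dot a p + dot a p'.
Proof. by rewrite /dot -big_split; apply: eq_bigr => i _; rewrite !mxE mulrDr. Qed.

Lemma dotNl a p : dot (- a) p = - dot a p.
Proof. by rewrite /dot -sumrN; apply: eq_bigr => i _; rewrite !mxE mulNr. Qed.

Definition shear u e x : 'rV[F]_d.+1 :=
  mkpoint (proj x + u) (lastc x - dot u (proj x) + e).

Lemma proj_shear u e x : proj (shear u e x) = proj x + u.
Proof. exact: proj_mkpoint. Qed.

Lemma shear_inj u e : injective (shear u e).
Proof.
move=> x y Exy; have Ep : proj x = proj y.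
  by apply: (addIr u); rewrite -(proj_shear u e) Exy proj_shear.
have := congr1 lastc Exy; rewrite !lastc_mkpoint Ep => /addIr /addIr El.
by rewrite -(mkpoint_eta x) -(mkpoint_eta y) Ep El.
Qed.

Lemma shear_transitive x y : exists u e, shear u e x = y.
Proof.
exists (proj y - proj x), (lastc y - lastc x + dot (proj y - proj x) (proj x)).
by rewrite /shear -[RHS]mkpoint_eta; congr mkpoint; [rewrite addrC subrK | ring].
Qed.

Lemma preimset_shear_inj u e :
  injective (fun X : {set 'rV[F]_d.+1} => shear u e @^-1: X).
Proof.
have [g _ gK] := injF_bij (@shear_inj u e).
by move=> X Y /setP E; apply/setP => y; have := E (g y); rewrite !inE gK.
Qed.

Definition shear_offset a u e b : F := b + e - dot a u + dot u u.

Lemma preim_shear_hyperplane u e a b :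
  shear u e @^-1: transversal_hyperplane (a - u) (shear_offset a u e b)
  = transversal_hyperplane a b.
Proof.
apply/setP => x; rewrite !inE -/(lastc _) -/(lastc x) -!/(dot _ _).
rewrite lastc_mkpoint proj_shear /shear_offset !(dotDl, dotDr, dotNl).
by rewrite -subr_eq0 -[X in _ = X]subr_eq0; congr (_ == 0); ring.
Qed.

Lemma shear_offset_surj u e a' b' :
  exists a b, a' = a - u /\ b' = shear_offset a u e b.
Proof.
exists (a' + u), (b' - e + dot (a' + u) u - dot u u).
by rewrite addrK /shear_offset; split => //; ring.
Qed.

End Shear.

Lemma conj_perm_exists (T U : finType) (f : T -> U) (g : U -> U) :
  bijective f -> injective g -> exists s : {perm T}, forall x, f (s x) = g (f x).
Proof.
case=> f' fK f'K g_inj.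
have t_inj : injective (f' \o g \o f) by move=> x y /(can_inj f'K) /g_inj /(can_inj fK).
by exists (perm t_inj) => x; rewrite permE /= f'K.
Qed.

Section Relabel.
Variables (F : finFieldType) (m d : nat) (Omega : finType).
Local Notation deal := (deal m Omega).
Local Notation token := (token F d Omega).
Local Notation run := (run F d Omega).
Local Notation map := {ffun Omega -> 'rV[F]_d.+1}.
Local Notation Pi := (@Pi F m d Omega).
Implicit Types (H : deal) (s : {perm Omega}) (f : map) (r : run).

Definition initial_segment H r : bool :=
  [exists p, valid_choice H p && prefix r (exec_of H p.1.1 p.1.2)].

Lemma mem_Pi H r t : (t \in Pi H r) = initial_segment H (rcons r t).
Proof.
rewrite inE /max_execs has_map; apply/hasP/existsP => [[p]|[p /andP[v pr]]].
  by rewrite mem_filter => /andP[v _] pr; exists p; rewrite v.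
by exists p => //; rewrite mem_filter v mem_enum.
Qed.

Lemma valid_choice_bij H f a b : valid_choice H (f, a, b) -> bijective f.
Proof.
case/and3P => /injectiveP f_inj /forallP f_onto _; apply: inj_card_bij => //.
rewrite -(card_codom f_inj); apply/subset_leq_card/subsetP => y _.
by have /existsP[c /eqP <-] := f_onto y; apply: codom_f.
Qed.

Definition relabel s H : deal := [ffun c => H (s c)].

Lemma hand_relabel s H P : hand (relabel s H) P = s @^-1: hand H P.
Proof. by apply/setP => c; rewrite !inE ffunE. Qed.

Lemma relabel_type tau s H :
  is_deal_of_type tau (relabel s H) = is_deal_of_type tau H.
Proof. by apply: eq_forallb => P; rewrite hand_relabel card_preimset //; apply: perm_inj. Qed.

Lemma relabelK s : cancel (relabel s) (relabel s^-1%g).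
Proof. by move=> H; apply/ffunP => c; rewrite !ffunE permKV. Qed.

Definition relabel_map s f : map := [ffun c => f (s^-1%g c)].

Lemma relabel_mapK s : cancel (relabel_map s) (relabel_map s^-1%g).
Proof. by move=> f; apply/ffunP => c; rewrite !ffunE invgK permK. Qed.

Lemma valid_relabel s H f a b :
  valid_choice (relabel s H) (f, a, b) -> valid_choice H (relabel_map s f, a, b).
Proof.
case/and3P => /injectiveP f_inj /forallP f_onto /eqP hyp; apply/and3P; split.
- by apply/injectiveP => c c' /[!ffunE] /f_inj /perm_inj.
- apply/forallP => y; have /existsP[c /eqP <-] := f_onto y.
  by apply/existsP; exists (s c); rewrite ffunE permK.
- rewrite -hyp; apply/eqP; congr (~: _); apply/setP => y.
  apply/imsetP/imsetP => -[c hc ->].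
    by exists (s^-1%g c); rewrite ?ffunE // hand_relabel inE permKV.
  by exists (s c); rewrite ?ffunE ?permK //; move: hc; rewrite hand_relabel inE.
Qed.

Definition relabel_token s (x : token) : token :=
  if x is inl f then inl (relabel_map s f) else x.

Lemma relabel_token_inj s : injective (relabel_token s).
Proof.
by case=> [f|X] [f'|X'] //= [E]; rewrite ?(can_inj (relabel_mapK s) E) ?E.
Qed.

Lemma relabel_token_Pi_nil s H x :
  x \in Pi (relabel s H) [::] -> relabel_token s x \in Pi H [::].
Proof.
rewrite !mem_Pi => /existsP[[[f a] b] /andP[v]] /=.
rewrite prefix0s andbT => /eqP ->.
apply/existsP; exists (relabel_map s f, a, b).
by rewrite valid_relabel //= eqxx prefix0s.
Qed.

Lemma card_Pi_nil_relabel s H : #|Pi (relabel s H) [::]| = #|Pi H [::]|.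
Proof.
have le_Pi s' H' : (#|Pi (relabel s' H') [::]| <= #|Pi H' [::]|)%N.
  rewrite -(card_imset _ (@relabel_token_inj s')); apply/subset_leq_card/subsetP.
  by move=> _ /imsetP[x hx ->]; apply: relabel_token_Pi_nil.
by apply/eqP; rewrite eqn_leq le_Pi -{1}(relabelK s H) le_Pi.
Qed.

Section ShearRelabel.
Variables (f : map) (s : {perm Omega}) (u : 'rV[F]_d) (e : F).
Hypothesis f_relabel : forall c, f (s c) = shear u e (f c).

Lemma image_hand_relabel H P :
  f @: hand (relabel s H) P = shear u e @^-1: (f @: hand H P).
Proof.
apply/setP => y; rewrite inE; apply/imsetP/imsetP => -[c hc E].
  by exists (s c); rewrite -?f_relabel ?E //; move: hc; rewrite hand_relabel inE.
exists (s^-1%g c); first by rewrite hand_relabel inE permKV.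
by apply: (@shear_inj _ _ u e); rewrite E -f_relabel permKV.
Qed.

Lemma valid_shear_relabel H a b :
  valid_choice (relabel s H) (f, a, b)
  = valid_choice H (f, a - u, shear_offset a u e b).
Proof.
rewrite /valid_choice image_hand_relabel -preimsetC.
by rewrite -(preim_shear_hyperplane u e a b) (inj_eq (@preimset_shear_inj _ _ u e)).
Qed.

Lemma shifted_proj_image_relabel H a P :
  shifted_proj_image a f (hand (relabel s H) P)
  = shifted_proj_image (a - u) f (hand H P).
Proof.
have shift c : proj (f (s c)) + (a - u) = proj (f c) + a.
  by rewrite f_relabel proj_shear addrACA subrr addr0.
apply/setP => y; apply/imsetP/imsetP => -[c hc ->].
  by exists (s c); rewrite ?shift //; move: hc; rewrite hand_relabel inE.
exists (s^-1%g c); first by rewrite hand_relabel inE permKV.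
by rewrite -shift permKV.
Qed.

Lemma exec_of_relabel H a : exec_of (relabel s H) f a = exec_of H f (a - u).
Proof. by congr (_ :: _); apply: eq_map => k; rewrite shifted_proj_image_relabel. Qed.

Lemma initial_segment_relabel H r :
  initial_segment (relabel s H) (inl f :: r) = initial_segment H (inl f :: r).
Proof.
have first_map H' f' a : prefix (inl f :: r) (exec_of H' f' a) -> f' = f.
  by rewrite /exec_of /= => /andP[/eqP[->]].
apply/existsP/existsP => -[[[f' a] b] /andP[v pr]];
  have Ef : f' = f := first_map _ _ _ pr; rewrite {}Ef in v pr.
- exists (f, a - u, shear_offset a u e b).
  by rewrite -valid_shear_relabel v -exec_of_relabel.
- have [a0 [b0 [Ea Eb]]] := shear_offset_surj u e a b; subst a b.
  by exists (f, a0, b0); rewrite valid_shear_relabel v exec_of_relabel.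
Qed.

Lemma Pi_cons_relabel H r : Pi (relabel s H) (inl f :: r) = Pi H (inl f :: r).
Proof. by apply/setP => t; rewrite !mem_Pi rcons_cons initial_segment_relabel. Qed.

Lemma run_weight_relabel H r :
  run_weight (relabel s H) (inl f :: r) = run_weight H (inl f :: r).
Proof.
rewrite /run_weight /= !big_ord_recl /= !mem_Pi /= initial_segment_relabel.
rewrite card_Pi_nil_relabel; congr (_ * _).
by apply: eq_bigr => k _; rewrite Pi_cons_relabel.
Qed.

End ShearRelabel.

Definition exchangeable_cards (w : deal -> rat) : Prop :=
  forall c1 c2, exists2 s : {perm Omega}, s c2 = c1 & forall H, w (relabel s H) = w H.

Lemma run_weight_exchangeable (tau : agent m -> nat) r :
  is_run tau r -> exchangeable_cards (fun H => run_weight H r).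
Proof.
case=> H0 /andP[_ /forallP ex] c1 c2; case: r ex => [|t0 r] ex.
  by exists (tperm c2 c1) => [|H]; rewrite ?tpermL // /run_weight !big_ord0.
have := ex ord0; rewrite /= mem_Pi => /existsP[[[f a] b] /andP[v /andP[/eqP -> _]]].
have f_bij := valid_choice_bij v.
have [u [e Ef]] := shear_transitive (f c2) (f c1).
have [s f_relabel] := conj_perm_exists f_bij (@shear_inj _ _ u e).
exists s => [|H]; last exact: (run_weight_relabel f_relabel).
by apply: (bij_inj f_bij); rewrite f_relabel Ef.
Qed.

End Relabel.

Section Counting.
Variables (F : finFieldType) (m d : nat) (Omega : finType) (tau : agent m -> nat).
Local Notation deal := (deal m Omega).
Local Notation typed := (is_deal_of_type tau).
Implicit Types (H : deal) (w : deal -> rat) (r : run F d Omega).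

Lemma run_weight_ge0 H r : 0 <= run_weight H r.
Proof. by apply: prodr_ge0 => k _; case: ifP => // _; rewrite invr_ge0 ler0n. Qed.

Lemma run_weight_gt0 H r : is_execution tau H r -> 0 < run_weight H r.
Proof.
case/andP => _ /forallP ex; apply: prodr_gt0 => k _; rewrite ex invr_gt0 ltr0n.
by rewrite card_gt0; apply/set0Pn; exists (nth (tok0 F d Omega) r k).
Qed.

Lemma sum_hand_weight w P :
  \sum_(c : Omega) \sum_(H | typed H && (H c == P)) w H = (tau P)%:R * \sum_(H | typed H) w H.
Proof.
under eq_bigr do rewrite big_mkcondr; rewrite exchange_big mulr_sumr.
apply: eq_bigr => H /forallP/(_ P)/eqP card_hand; rewrite -big_mkcond /=.
rewrite (eq_bigl (fun c => c \in hand H P)) => [|c]; last by rewrite inE.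
by rewrite sumr_const card_hand mulr_natl.
Qed.

Lemma sum_weight_relabel w (s : {perm Omega}) c P :
  (forall H, w (relabel s H) = w H) ->
  \sum_(H | typed H && (H c == P)) w H = \sum_(H | typed H && (H (s c) == P)) w H.
Proof.
move=> w_inv; rewrite (reindex_inj (can_inj (relabelK s))).
by apply: eq_big => [H|H _]; rewrite ?relabel_type ?ffunE ?w_inv.
Qed.

Lemma cond_prob_exchangeable r c P :
  is_run tau r -> exchangeable_cards (fun H => run_weight H r) ->
  cond_prob tau (fun H => H c == P) r = (tau P)%:R / #|Omega|%:R.
Proof.
case=> H0 exec0 exch; set w := fun H => run_weight H r.
set N := \sum_(H | typed H && (H c == P)) w H.
set T := \sum_(H | typed H) w H.
have N_const c' : \sum_(H | typed H && (H c' == P)) w H = N.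
  by have [s <- w_inv] := exch c' c; rewrite /N (sum_weight_relabel c P w_inv).
have := sum_hand_weight w P; rewrite (eq_bigr _ (fun c' _ => N_const c')) sumr_const.
have T_gt0 : 0 < T.
  rewrite /T (bigD1 H0) ?(proj1 (andP exec0)) //=.
  by rewrite ltr_pwDl ?run_weight_gt0 // sumr_ge0 // => H _; apply: run_weight_ge0.
have deals_gt0 : (0 < #|[set H : deal | typed H]|)%N.
  by apply/card_gt0P; exists H0; rewrite inE (proj1 (andP exec0)).
have Omega_gt0 : (0 < #|Omega|)%N by apply/card_gt0P; exists c.
rewrite -[N *+ _]mulr_natr => sumN.
rewrite /cond_prob /prob_and -/w -/N.
have -> : \sum_(H | typed H && predT H) w H = T by apply: eq_bigl => H; rewrite andbT.
have -> : N = (tau P)%:R * T / #|Omega|%:R.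
  by rewrite -sumN mulrK // unitfE pnatr_eq0 -lt0n.
by field; rewrite !pnatr_eq0 -!lt0n Omega_gt0 deals_gt0 gt_eqF.
Qed.
End Counting.

Local Close Scope ring_scope.
Unset Implicit Arguments.

Theorem mainTheorem13 (F : finFieldType) (m d : nat) (Omega : finType)
  (tau : 'I_m.+1 -> nat) :
  1 < m -> m < #|F| -> 0 < d ->
  (forall P, 0 < tau P) ->
  \sum_(P < m.+1) tau P = #|F| ^ d.+1 ->
  tau (agentA m) = #|F| ^ d.+1 - #|F| ^ d ->
  (forall k : 'I_m, #|F| ^ d.-1 < tau (agentB k)) ->
  #|Omega| = \sum_(P < m.+1) tau P ->
  forall rho : run F d Omega, is_run tau rho ->
  forall (c : Omega) (P : 'I_m.+1),
    cond_prob tau (fun H : deal m Omega => H c == P) rho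
    = ((tau P)%:R / (\sum_(P' < m.+1) tau P')%:R)%R.
Proof.
move=> _ _ _ _ _ _ _ card_Omega rho rho_run c P; rewrite -card_Omega.
exact: cond_prob_exchangeable rho_run (run_weight_exchangeable rho_run).
Qed.
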